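(* Let $\bar A=I_{N_sN_t}$. Assume there is $L_f>0$ with $\|f(w,t)-f(y,t)\|_2\le L_f\|w-y\|_2$ for all $w,y\in\mathbb{R}^{N_s}$, $t\in[0,T]$, and $\Delta t<\sigma_{\min}(A_{LM})/(L_f\sigma_{\max}(B_{LM}))$. Let $x\in\mathbb{R}^{N_sN_t}$ satisfy $\bar r(x)=0$ and $\tilde x\in\arg\min_{w\in\mathcal{S}}\|\bar r(w)\|_2$. Define $$\Lambda:=\frac{\sigma_{\max}(A_{LM})-\sigma_{\min}(A_{LM})+2\Delta t L_f\sigma_{\max}(B_{LM})}{\sigma_{\min}(A_{LM})-\Delta t L_f\sigma_{\max}(B_{LM})}.$$ Then $\|x-\tilde x\|_2\le(1+\Lambda)\min_{w\in\mathcal{S}}\|x-w\|_2$ and $\max_{1\le n\le N_t}\|x^n-\tilde x^n\|_2\le\sqrt{N_t}(1+\Lambda)\min_{w\in\mathcal{S}}\max_{1\le n\le N_t}\|x^n-w^n\|_2$.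
   Context: Let $f:\mathbb{R}^{N_s}\times[0,T]\to\mathbb{R}^{N_s}$ be the velocity of the ODE $\dot x=f(x,t)$, $x(0)=x^0\in\mathbb{R}^{N_s}$. Use a uniform time grid $t^n=n\Delta t$, $n=0,\dots,N_t$, $\Delta t=T/N_t$. A linear multistep scheme is given by integers $k(n)\le n$ and coefficients $\alpha_j^n,\beta_j^n\in\mathbb{R}$, $j=0,\dots,k(n)$, $n=1,\dots,N_t$, with $\alpha_0^n\neq0$. For $w=(w^1,\dots,w^{N_t})\in\mathbb{R}^{N_sN_t}$ (blocks $w^n\in\mathbb{R}^{N_s}$) set $w^0:=x^0$ and define the residual at step $n$ by $r^n(w)=\sum_{j=0}^{k(n)}\alpha_j^n w^{n-j}-\Delta t\sum_{j=0}^{k(n)}\beta_j^n f(w^{n-j},t^{n-j})$, and the space–time residual $\bar r(w)=(r^1(w),\dots,r^{N_t}(w))\in\mathbb{R}^{N_sN_t}$. Let $A_{LM},B_{LM}\in\mathbb{R}^{N_sN_t\times N_sN_t}$ be the block lower-triangular matrices (blocks of size $N_s\times N_s$) whose $(n,n-j)$ block is $\alpha_j^n I_{N_s}$, resp. $\beta_j^n I_{N_s}$, for $0\le j\le k(n)$ with $n-j\ge1$, and zero otherwise. $\sigma_{\max}(M)$, $\sigma_{\min}(M)$ denote the largest and smallest singular values of $M$; $\|\cdot\|_2$ is the Euclidean norm on $\mathbb{R}^{N_sN_t}$. The space–time trial subspace is the affine subspace $\mathcal{S}=\{(x^0,\dots,x^0)+\sum_{i=1}^{n_{st}}c_i\pi_i: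 c\in\mathbb{R}^{n_{st}}\}\subseteq\mathbb{R}^{N_sN_t}$ for given vectors $\pi_1,\dots,\pi_{n_{st}}\in\mathbb{R}^{N_sN_t}$. *)

From HB Require Import structures.
From mathcomp Require Import all_boot all_order all_algebra.
Set Implicit Arguments. Unset Strict Implicit. Unset Printing Implicit Defensive.
Import Order.TTheory GRing.Theory Num.Theory.
Local Open Scope ring_scope.

Section Defs.
Variable R : rcfType.

Definition vget {N : nat} (w : 'cV[R]_N) (p : nat) : R :=
  match (insub p : option 'I_N) with Some o => w o 0 | None => 0 end.

Definition norm2 {N : nat} (v : 'cV[R]_N) : R := Num.sqrt (\sum_(i < N) v i 0 ^+ 2).

(* Space-time vectors live in R^(Nt*Ns); the block w^n (1 <= n <= Nt)
   consists of entries (n-1)*Ns + i, i < Ns.  By convention w^0 := x0. *)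
Definition block (Ns Nt : nat) (x0 : 'cV[R]_Ns) (w : 'cV[R]_(Nt * Ns)) (n : nat)
  : 'cV[R]_Ns :=
  if n is m.+1 then \col_(i < Ns) vget w (m * Ns + i)%N else x0.

Definition lm_resid (Ns Nt : nat) (dt : R) (f : 'cV[R]_Ns -> R -> 'cV[R]_Ns)
  (k : nat -> nat) (alpha beta : nat -> nat -> R) (x0 : 'cV[R]_Ns)
  (w : 'cV[R]_(Nt * Ns)) (n : nat) : 'cV[R]_Ns :=
  \sum_(j < (k n).+1)
     (alpha n j *: block x0 w (n - j)%N
      - (dt * beta n j) *: f (block x0 w (n - j)%N) ((n - j)%N%:R * dt)).

Definition st_resid (Ns Nt : nat) (dt : R) (f : 'cV[R]_Ns -> R -> 'cV[R]_Ns)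
  (k : nat -> nat) (alpha beta : nat -> nat -> R) (x0 : 'cV[R]_Ns)
  (w : 'cV[R]_(Nt * Ns)) : 'cV[R]_(Nt * Ns) :=
  \col_(p < Nt * Ns)
     vget (lm_resid dt f k alpha beta x0 w (p %/ Ns)%N.+1) (p %% Ns)%N.

(* Block lower-triangular matrix whose (n, n-j) block (1-based, n-j >= 1,
   0 <= j <= k(n)) is coef n j * I_Ns; used for A_LM (coef = alpha) and
   B_LM (coef = beta). *)
Definition lm_matrix (Ns Nt : nat) (k : nat -> nat) (coef : nat -> nat -> R)
  : 'M[R]_(Nt * Ns) :=
  \matrix_(p < Nt * Ns, q < Nt * Ns)
    let b := (p %/ Ns)%N in let c := (q %/ Ns)%N in
    if ((p %% Ns)%N == (q %% Ns)%N) && (c <= b)%N && (b - c <= k b.+1)%N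
    then coef b.+1 (b - c)%N else 0.

Definition singular_value {N : nat} (M : 'M[R]_N) (s : R) : Prop :=
  0 <= s /\ eigenvalue (M^T *m M) (s ^+ 2).

Definition is_sigma_max {N : nat} (M : 'M[R]_N) (s : R) : Prop :=
  singular_value M s /\ forall s', singular_value M s' -> s' <= s.

Definition is_sigma_min {N : nat} (M : 'M[R]_N) (s : R) : Prop :=
  singular_value M s /\ forall s', singular_value M s' -> s <= s'.

(* The affine trial subspace S = (x0,...,x0) + span(pi_1..pi_nst). *)
Definition x0_rep (Ns Nt : nat) (x0 : 'cV[R]_Ns) : 'cV[R]_(Nt * Ns) :=
  \col_(p < Nt * Ns) vget x0 (p %% Ns)%N.

Definition in_trial (Ns Nt nst : nat) (x0 : 'cV[R]_Ns)
  (pi : 'I_nst -> 'cV[R]_(Nt * Ns)) (w : 'cV[R]_(Nt * Ns)) : Prop :=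
  exists c : 'I_nst -> R, w = x0_rep Nt x0 + \sum_(i < nst) c i *: pi i.

End Defs.

(* The space-time residual is bi-Lipschitz.  Writing F for the stacked velocities
   f(w^n, t^n), one has r(w) - r(y) = A_LM (w - y) - dt B_LM (F(w) - F(y)), so
     c |w - y| <= |r(w) - r(y)| <= C |w - y|,
   with c = sigma_min(A_LM) - dt L_f sigma_max(B_LM) > 0 and
   C = sigma_max(A_LM) + dt L_f sigma_max(B_LM), the singular-value bounds coming
   from the spectral theorem applied to the Gram matrices.  As r(x) = 0 and x~
   minimizes |r| on S, for w in S
     c |x - x~| <= |r(x~)| <= |r(w)| <= C |x - w|,
   and C / c = 1 + Lambda.  The max-in-time estimate follows from
   max_n |v^n| <= |v| <= sqrt(N_t) max_n |v^n|. *)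

From HB Require Import structures.
From mathcomp Require Import all_boot all_order all_algebra.
From mathcomp Require Import sesquilinear spectral ring lra.
From mathcomp.real_closed Require Import complex.
Import Order.TTheory GRing.Theory Num.Theory.
Local Open Scope ring_scope.
Local Open Scope sesquilinear_scope.
Set Implicit Arguments. Unset Strict Implicit. Unset Printing Implicit Defensive.

Section EuclideanNorm.
Variable R : rcfType.

Definition sqnorm {N : nat} (v : 'cV[R]_N) : R := \sum_(i < N) v i 0 ^+ 2.

Lemma sqnorm_ge0 N (v : 'cV[R]_N) : 0 <= sqnorm v.
Proof. by apply: sumr_ge0 => i _; apply: sqr_ge0. Qed.

Lemma norm2_ge0 N (v : 'cV[R]_N) : 0 <= norm2 v.
Proof. exact: sqrtr_ge0. Qed.

Lemma sqr_norm2 N (v : 'cV[R]_N) : norm2 v ^+ 2 = sqnorm v.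
Proof. by rewrite sqr_sqrtr // sqnorm_ge0. Qed.

Lemma sqnorm_eq0 N (u : 'cV[R]_N) : (sqnorm u == 0) = (u == 0).
Proof.
apply/idP/eqP => [/eqP u0|->]; last by rewrite /sqnorm big1 // => i _; rewrite mxE expr0n.
apply/colP => i; rewrite mxE; apply/eqP; rewrite -sqrf_eq0; apply/eqP.
by apply: (psumr_eq0P _ u0) => // j _; apply: sqr_ge0.
Qed.

Lemma sqnormE N (v : 'cV[R]_N) : sqnorm v = (v^T *m v) 0 0.
Proof. by rewrite mxE; apply: eq_bigr => i _; rewrite mxE expr2. Qed.

Lemma ler_norm2 m n (u : 'cV[R]_m) (v : 'cV[R]_n) :
  (norm2 u <= norm2 v) = (sqnorm u <= sqnorm v).
Proof. exact: ler_sqrt (sqnorm_ge0 v). Qed.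

Lemma ler_mul_norm2 m n a (u : 'cV[R]_m) (v : 'cV[R]_n) : 0 <= a ->
  (a * norm2 u <= norm2 v) = (a ^+ 2 * sqnorm u <= sqnorm v).
Proof.
move=> a0; rewrite -(@ler_pXn2r _ 2) ?nnegrE ?mulr_ge0 ?norm2_ge0 //.
by rewrite exprMn !sqr_norm2.
Qed.

Lemma ler_norm2_mul m n a (u : 'cV[R]_m) (v : 'cV[R]_n) : 0 <= a ->
  (norm2 v <= a * norm2 u) = (sqnorm v <= a ^+ 2 * sqnorm u).
Proof.
move=> a0; rewrite -(@ler_pXn2r _ 2) ?nnegrE ?mulr_ge0 ?norm2_ge0 //.
by rewrite exprMn !sqr_norm2.
Qed.

Lemma cauchy_schwarz (I : finType) (a b : I -> R) :
  (\sum_i a i * b i) ^+ 2 <= (\sum_i a i ^+ 2) * (\sum_i b i ^+ 2).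
Proof.
set A := \sum_i a i ^+ 2; set B := \sum_i b i ^+ 2; set S := \sum_i a i * b i.
have B0 : 0 <= B by apply: sumr_ge0 => i _; apply: sqr_ge0.
have [B_eq0 | B_neq0] := eqVneq B 0.
  have b_eq0 i : b i = 0.
    apply/eqP; rewrite -sqrf_eq0; apply/eqP.
    by apply: (psumr_eq0P _ B_eq0) => // j _; apply: sqr_ge0.
  by rewrite /S big1 ?B_eq0 ?expr0n ?mulr0 // => i _; rewrite b_eq0 mulr0.
have B_gt0 : 0 < B by rewrite lt_def B_neq0.
have : 0 <= \sum_i (B * a i - S * b i) ^+ 2 by apply: sumr_ge0 => i _; apply: sqr_ge0.
have -> : \sum_i (B * a i - S * b i) ^+ 2 = B * (B * A - S ^+ 2).
  rewrite (eq_bigr (fun i => B ^+ 2 * a i ^+ 2 - 2 * B * S * (a i * b i)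
                             + S ^+ 2 * b i ^+ 2)); last by move=> i _; ring.
  rewrite !big_split /= sumrN -!mulr_sumr -/A -/B -/S; ring.
by rewrite pmulr_rge0 // subr_ge0 mulrC.
Qed.

Lemma ler_norm2D N (u v : 'cV[R]_N) : norm2 (u + v) <= norm2 u + norm2 v.
Proof.
have uv_ge0 : 0 <= norm2 u * norm2 v by rewrite mulr_ge0 ?norm2_ge0.
have dot_le : \sum_i u i 0 * v i 0 <= norm2 u * norm2 v.
  apply: le_trans (ler_norm _) _.
  by rewrite -(@ler_pXn2r _ 2) ?nnegrE // real_normK ?num_real // exprMn
    !sqr_norm2 cauchy_schwarz.
rewrite -(@ler_pXn2r _ 2) ?nnegrE ?addr_ge0 ?norm2_ge0 // sqrrD !sqr_norm2.
have -> : sqnorm (u + v) = sqnorm u + 2 * \sum_i u i 0 * v i 0 + sqnorm v.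
  rewrite /sqnorm mulr_sumr -!big_split /=.
  by apply: eq_bigr => i _; rewrite !mxE; ring.
rewrite mulr2n; lra.
Qed.

Lemma norm2Z N c (v : 'cV[R]_N) : norm2 (c *: v) = `|c| * norm2 v.
Proof.
rewrite -sqrtr_sqr -sqrtrM ?sqr_ge0 //; congr Num.sqrt.
by rewrite mulr_sumr; apply: eq_bigr => i _; rewrite !mxE exprMn.
Qed.

Lemma norm2N N (v : 'cV[R]_N) : norm2 (- v) = norm2 v.
Proof. by rewrite -scaleN1r norm2Z normrN1 mul1r. Qed.

Lemma norm2BC N (u v : 'cV[R]_N) : norm2 (u - v) = norm2 (v - u).
Proof. by rewrite -norm2N opprB. Qed.

Lemma lerB_norm2B N (u v : 'cV[R]_N) : norm2 u - norm2 v <= norm2 (u - v).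
Proof. by have := ler_norm2D (u - v) v; rewrite subrK lerBlDr. Qed.

Lemma ler_norm2B N (u v : 'cV[R]_N) : norm2 (u - v) <= norm2 u + norm2 v.
Proof. by rewrite -(norm2N v) ler_norm2D. Qed.

End EuclideanNorm.

Lemma spectral_diag_eigenvalue (C : numClosedFieldType) n (A : 'M[C]_n) i :
  A \is normalmx -> eigenvalue A (spectral_diag A 0 i).
Proof.
move=> /orthomx_spectralP A_eq; set P := spectralmx A in A_eq.
have P_unitary : P \is unitarymx := spectral_unitarymx A.
have PPt : P *m P^t* = 1%:M by apply/unitarymxP.
apply/eigenvalueP; exists (row i P).
  rewrite {1}A_eq invmx_unitary // -row_mul !mulmxA PPt mul1mx.
  by rewrite row_mul row_diag_mx -scalemxAl -rowE.
apply: contraTneq isT => Pi0.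
have : row i (P *m P^t*) = 0 by rewrite row_mul Pi0 mul0mx.
by rewrite PPt => /rowP /(_ i) /eqP; rewrite !mxE eqxx oner_eq0.
Qed.

Lemma hermitian_rayleigh_ge (C : numClosedFieldType) n (A : 'M[C]_n) a :
  A \is hermsymmx -> (forall i, a <= spectral_diag A 0 i) ->
  forall w : 'rV[C]_n, a * (w *m w^t*) 0 0 <= (w *m A *m w^t*) 0 0.
Proof.
move=> A_herm a_le w.
have /orthomx_spectralP A_eq := hermitian_normalmx A_herm.
set P := spectralmx A in A_eq; set d := spectral_diag A in A_eq a_le.
have P_unitary : P \is unitarymx := spectral_unitarymx A.
have PtP : P^t* *m P = 1%:M.
  by rewrite -invmx_unitary // mulVmx // unitarymx_unit.
set z := w *m P^t*.
have zt : z^t* = P *m w^t* by rewrite trmx_mul map_mxM trmxCK.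
have -> : w *m A *m w^t* = z *m diag_mx d *m z^t*.
  by rewrite zt {1}A_eq invmx_unitary // !mulmxA.
have -> : w *m w^t* = z *m z^t*.
  by rewrite zt mulmxA -[w *m P^t* *m P]mulmxA PtP mulmx1.
rewrite mul_mx_diag !mxE mulr_sumr; apply: ler_sum => i _; rewrite !mxE.
set zi := \sum_j _.
by rewrite [X in _ <= X]mulrAC [X in _ <= X]mulrC ler_wpM2r ?mul_conjC_ge0.
Qed.

Section SingularValues.
Variable R : rcfType.
Local Notation toC := (real_complex R).

Lemma real_complex_conj (x : R) : (toC x)^* = toC x.
Proof. by apply/CrealP/complex_realP; exists x. Qed.

Lemma sym_rayleigh_ge n (S : 'M[R]_n) a :
  S^T = S -> (forall x, eigenvalue S x -> a <= x) ->
  forall u : 'cV[R]_n, a * sqnorm u <= (u^T *m S *m u) 0 0.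
Proof.
(* The spectral theorem is stated over an algebraically closed field: embed in R[i]. *)
move=> S_sym a_le u.
set S' := map_mx toC S.
have S'_herm : S' \is hermsymmx.
  apply/is_hermitianmxP; rewrite expr0 scale1r.
  by apply/matrixP => i j; rewrite !mxE real_complex_conj -[in LHS]S_sym mxE.
have a_le_d i : toC a <= spectral_diag S' 0 i.
  have := spectral_diag_eigenvalue i (hermitian_normalmx S'_herm).
  have /complex_realP [x ->] : spectral_diag S' 0 i \is Num.real.
    exact: mxOverP (hermitian_spectral_diag_real S'_herm) _ _.
  by rewrite eigenvalue_map lecR => /a_le.
set w := map_mx toC u^T.
have wt : w^t* = map_mx toC u.
  by apply/matrixP => i j; rewrite !mxE real_complex_conj.
have := hermitian_rayleigh_ge S'_herm a_le_d w.
by rewrite wt -!map_mxM !mxE -rmorphM lecR sqnormE mxE.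
Qed.

Lemma sym_rayleigh_le n (S : 'M[R]_n) b :
  S^T = S -> (forall x, eigenvalue S x -> x <= b) ->
  forall u : 'cV[R]_n, (u^T *m S *m u) 0 0 <= b * sqnorm u.
Proof.
move=> S_sym le_b u.
have NS_sym : (- S)^T = - S by rewrite linearN /= S_sym.
have le_NS x : eigenvalue (- S) x -> - b <= x.
  move=> /eigenvalueP [v vS v_neq0]; rewrite lerNl; apply: le_b.
  by apply/eigenvalueP; exists v; rewrite // scaleNr -vS mulmxN opprK.
have := sym_rayleigh_ge NS_sym le_NS u.
by rewrite mulmxN mulNmx mxE mulNr lerN2.
Qed.

Lemma trmx_gram n (M : 'M[R]_n) : (M^T *m M)^T = M^T *m M.
Proof. by rewrite trmx_mul trmxK. Qed.

Lemma sqnorm_mulmx n (M : 'M[R]_n) (u : 'cV[R]_n) :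
  sqnorm (M *m u) = (u^T *m (M^T *m M) *m u) 0 0.
Proof. by rewrite sqnormE trmx_mul !mulmxA. Qed.

Lemma gram_eigenvalue_ge0 n (M : 'M[R]_n) x : eigenvalue (M^T *m M) x -> 0 <= x.
Proof.
move=> /eigenvalueP [v vG v_neq0].
have sq_gt0 : 0 < sqnorm v^T by rewrite lt_def sqnorm_eq0 trmx_eq0 v_neq0 sqnorm_ge0.
have := sqnorm_ge0 (M *m v^T).
by rewrite sqnorm_mulmx trmxK vG -scalemxAl mxE -{1}[v]trmxK -sqnormE pmulr_lge0.
Qed.

Lemma gram_eigenvalue_singular n (M : 'M[R]_n) x :
  eigenvalue (M^T *m M) x -> singular_value M (Num.sqrt x).
Proof.
move=> ex; split; first exact: sqrtr_ge0.
by rewrite sqr_sqrtr // (gram_eigenvalue_ge0 ex).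
Qed.

Lemma norm2_mulmx_le n (M : 'M[R]_n) s :
  is_sigma_max M s -> forall u, norm2 (M *m u) <= s * norm2 u.
Proof.
move=> [[s_ge0 _] s_max] u; rewrite ler_norm2_mul // sqnorm_mulmx.
apply: sym_rayleigh_le (trmx_gram M) _ u => x ex.
rewrite -(sqr_sqrtr (gram_eigenvalue_ge0 ex)) lerXn2r ?nnegrE ?sqrtr_ge0 //.
exact/s_max/gram_eigenvalue_singular.
Qed.

Lemma norm2_mulmx_ge n (M : 'M[R]_n) s :
  is_sigma_min M s -> forall u, s * norm2 u <= norm2 (M *m u).
Proof.
move=> [[s_ge0 _] s_min] u; rewrite ler_mul_norm2 // sqnorm_mulmx.
apply: sym_rayleigh_ge (trmx_gram M) _ u => x ex.
rewrite -(sqr_sqrtr (gram_eigenvalue_ge0 ex)) lerXn2r ?nnegrE ?sqrtr_ge0 //.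
exact/s_min/gram_eigenvalue_singular.
Qed.

End SingularValues.

Section Entries.
Variable R : rcfType.

Lemma vgetE N (v : 'cV[R]_N) p (p_lt : (p < N)%N) : vget v p = v (Ordinal p_lt) 0.
Proof. by rewrite /vget insubT. Qed.

Lemma vget_ord N (v : 'cV[R]_N) (i : 'I_N) : vget v i = v i 0.
Proof. by rewrite (vgetE v (ltn_ord i)); congr (v _ 0); apply: val_inj. Qed.

Lemma vget_out N (v : 'cV[R]_N) p : (N <= p)%N -> vget v p = 0.
Proof. by move=> N_le; rewrite /vget insubF // ltnNge N_le. Qed.

Lemma vget_map2 N (op : R -> R -> R) (u v w : 'cV[R]_N) :
  op 0 0 = 0 -> (forall i, w i 0 = op (u i 0) (v i 0)) ->
  forall p, vget w p = op (vget u p) (vget v p).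
Proof.
move=> op00 wE p; have [p_lt | N_le] := ltnP p N; first by rewrite !(vgetE _ p_lt) wE.
by rewrite !vget_out.
Qed.

Lemma vgetD N (u v : 'cV[R]_N) p : vget (u + v) p = vget u p + vget v p.
Proof. by apply: (@vget_map2 _ +%R u v) => [|i]; rewrite ?addr0 ?mxE. Qed.

Lemma vgetB N (u v : 'cV[R]_N) p : vget (u - v) p = vget u p - vget v p.
Proof. by apply: (@vget_map2 _ (fun a b => a - b) u v) => [|i]; rewrite ?subr0 ?mxE. Qed.

Lemma vgetZ N c (u : 'cV[R]_N) p : vget (c *: u) p = c * vget u p.
Proof. by apply: (@vget_map2 _ (fun a _ => c * a) u u) => [|i]; rewrite ?mulr0 ?mxE. Qed.

Lemma vget_sum N m (V : 'I_m -> 'cV[R]_N) p :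
  vget (\sum_(j < m) V j) p = \sum_(j < m) vget (V j) p.
Proof.
elim/big_rec2: _ => [|j a b _ <-]; last by rewrite vgetD.
by rewrite /vget; case: insub => // o; rewrite mxE.
Qed.

Lemma vget_inj N (u v : 'cV[R]_N) :
  (forall p, (p < N)%N -> vget u p = vget v p) -> u = v.
Proof. by move=> uv; apply/colP => i; rewrite -!vget_ord uv. Qed.

Lemma sqnorm_vget N (v : 'cV[R]_N) : sqnorm v = \sum_(0 <= p < N) vget v p ^+ 2.
Proof. by rewrite big_mkord; apply: eq_bigr => i _; rewrite vget_ord. Qed.

End Entries.

Section Blocks.
Variable R : rcfType.
Variables (Ns Nt : nat) (x0 : 'cV[R]_Ns).

Lemma big_nat_blocks (g : nat -> R) :
  \sum_(0 <= p < Nt * Ns) g p = \sum_(0 <= n < Nt) \sum_(0 <= i < Ns) g (n * Ns + i)%N.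
Proof.
elim: Nt => [|m IHm]; first by rewrite mul0n !big_geq.
rewrite mulSnr (@big_cat_nat _ _ _ (m * Ns)) ?leq_addr //= IHm big_nat_recr //=.
congr (_ + _); rewrite -{1}[(m * Ns)%N]add0n big_addn addKn.
by apply: eq_bigr => i _; rewrite addnC.
Qed.

Lemma divn_modn_block c i : (i < Ns)%N ->
  ((c * Ns + i) %/ Ns = c)%N /\ ((c * Ns + i) %% Ns = i)%N.
Proof.
move=> i_lt; have Ns_gt0 : (0 < Ns)%N by apply: leq_ltn_trans i_lt.
by rewrite divnMDl // divn_small // addn0 modnMDl modn_small.
Qed.

Lemma block_index_lt c i : (c < Nt)%N -> (i < Ns)%N -> (c * Ns + i < Nt * Ns)%N.
Proof.
move=> c_lt i_lt; apply: (@leq_trans (c.+1 * Ns)); first by rewrite mulSnr ltn_add2l.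
by rewrite leq_mul2r c_lt orbT.
Qed.

Lemma vget_block (w : 'cV[R]_(Nt * Ns)) m i : (i < Ns)%N ->
  vget (block x0 w m.+1) i = vget w (m * Ns + i).
Proof. by move=> i_lt; rewrite (vgetE _ i_lt) mxE. Qed.

Lemma blockB (w y : 'cV[R]_(Nt * Ns)) m :
  block x0 (w - y) m.+1 = block x0 w m.+1 - block x0 y m.+1.
Proof. by apply/colP => i; rewrite !mxE vgetB. Qed.

Lemma sqnorm_blocks (v : 'cV[R]_(Nt * Ns)) :
  sqnorm v = \sum_(0 <= n < Nt) sqnorm (block x0 v n.+1).
Proof.
rewrite sqnorm_vget big_nat_blocks; apply: eq_big_nat => n _.
by rewrite sqnorm_vget; apply: eq_big_nat => i /andP[_ i_lt]; rewrite vget_block.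
Qed.

Lemma norm2_block_le (v : 'cV[R]_(Nt * Ns)) (n : 'I_Nt) :
  norm2 (block x0 v n.+1) <= norm2 v.
Proof.
rewrite ler_norm2 (sqnorm_blocks v) big_mkord (bigD1 n) //=.
by rewrite lerDl sumr_ge0 // => i _; apply: sqnorm_ge0.
Qed.

Lemma norm2_le_bigmax_blocks (v : 'cV[R]_(Nt * Ns)) :
  norm2 v <= Num.sqrt Nt%:R * \big[Num.max/0]_(n < Nt) norm2 (block x0 v n.+1).
Proof.
set M := \big[Num.max/0]_(n < Nt) _.
have M_ge0 : 0 <= M by rewrite /M bigmax_idl le_max lexx.
rewrite -(@ler_pXn2r _ 2) ?nnegrE ?mulr_ge0 ?sqrtr_ge0 ?norm2_ge0 //.
rewrite exprMn sqr_norm2 sqr_sqrtr ?ler0n // (sqnorm_blocks v) big_mkord.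
apply: (@le_trans _ _ (\sum_(n < Nt) M ^+ 2)); last by rewrite sumr_const card_ord mulr_natl.
apply: ler_sum => n _; rewrite -sqr_norm2 lerXn2r ?nnegrE ?norm2_ge0 //.
exact: (le_bigmax _ (fun n : 'I_Nt => norm2 (block x0 v n.+1))).
Qed.

End Blocks.

Section MultistepResidual.
Variable R : rcfType.
Variables (Ns Nt : nat) (dt : R) (f : 'cV[R]_Ns -> R -> 'cV[R]_Ns)
  (k : nat -> nat) (alpha beta : nat -> nat -> R) (x0 : 'cV[R]_Ns).
Hypothesis k_le : forall n, (k n <= n)%N.

Lemma big_nat_pick (i : nat) (P : bool) (X : R) (Y : nat -> R) : (i < Ns)%N ->
  \sum_(0 <= j < Ns) (if (i == j) && P then X else 0) * Y j = if P then X * Y i else 0.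
Proof.
move=> i_lt; case: P; last by rewrite big1 // => j _; rewrite andbF mul0r.
rewrite big_mkord (bigD1 (Ordinal i_lt)) //= eqxx big1 ?addr0 // => j j_neq.
case: eqP => [i_eq | _]; last by rewrite mul0r.
by move: j_neq; rewrite -val_eqE /= i_eq eqxx.
Qed.

Lemma big_band_reindex (b K : nat) (F G : nat -> R) :
  (b < Nt)%N -> (K <= b.+1)%N -> G 0%N = 0 ->
  \sum_(0 <= c < Nt) (if (c <= b)%N && (b - c <= K)%N then F (b - c)%N * G c.+1 else 0)
  = \sum_(j < K.+1) F j * G (b.+1 - j)%N.
Proof.
move=> b_lt K_le G0.
rewrite (@big_cat_nat _ _ _ b.+1) //= [X in _ + X]big_nat_cond [X in _ + X]big1;
  last by move=> c /andP[/andP[b_lt_c _] _]; rewrite leqNgt b_lt_c.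
rewrite addr0 big_nat_rev /= -(big_mkord xpredT (fun j => F j * G (b.+1 - j)%N)).
rewrite (big_nat_widen _ _ _ _ _ (K_le : (K.+1 <= b.+2)%N)).
rewrite [RHS]big_mkcond [RHS]big_nat_recr //= subnn G0 mulr0 if_same addr0.
apply: eq_big_nat => j /andP[_ j_le].
by rewrite add0n subSS subKn // leq_subr /= subSn // ltnS.
Qed.

(* The block w^0 = x0 has no column in A_LM; [H 0 = 0] records that it drops
   out, which is the case for differences of residuals. *)
Lemma vget_lm_matrix_mul (coef : nat -> nat -> R) (u : 'cV[R]_(Nt * Ns)) p
    (H : nat -> R) :
  (p < Nt * Ns)%N -> H 0%N = 0 ->
  (forall c, (c < Nt)%N -> vget u (c * Ns + p %% Ns) = H c.+1) ->
  vget (lm_matrix Ns Nt k coef *m u) p =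
  \sum_(j < (k (p %/ Ns).+1).+1) coef (p %/ Ns).+1 j * H ((p %/ Ns).+1 - j)%N.
Proof.
move=> p_lt H0 uH.
have Ns_gt0 : (0 < Ns)%N by case: (Ns) p_lt; rewrite ?muln0.
set b := (p %/ Ns)%N; set i := (p %% Ns)%N.
have i_lt : (i < Ns)%N by rewrite ltn_pmod.
have b_lt : (b < Nt)%N by rewrite ltn_divLR // mulnC.
rewrite (vgetE _ p_lt) mxE.
pose G (q : nat) :=
  (if (i == (q %% Ns)%N) && (q %/ Ns <= b)%N && (b - q %/ Ns <= k b.+1)%N
   then coef b.+1 (b - q %/ Ns)%N else 0) * vget u q.
rewrite (eq_bigr (fun q : 'I_(Nt * Ns) => G q)); last by move=> q _; rewrite /G mxE vget_ord.
rewrite -(big_mkord xpredT G) big_nat_blocks -(big_band_reindex _ _ (k_le _) H0) //.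
apply: eq_big_nat => c /andP[_ c_lt].
rewrite (@eq_big_nat _ _ _ 0 Ns _ (fun j =>
  (if (i == j) && ((c <= b)%N && (b - c <= k b.+1)%N) then coef b.+1 (b - c)%N else 0)
  * vget u (c * Ns + j)%N)).
  by rewrite big_nat_pick // uH.
by move=> j /andP[_ j_lt]; rewrite /G; have [-> ->] := divn_modn_block c j_lt; rewrite andbA.
Qed.

Definition st_velocity (w : 'cV[R]_(Nt * Ns)) : 'cV[R]_(Nt * Ns) :=
  \col_(p < Nt * Ns) vget (f (block x0 w (p %/ Ns).+1) ((p %/ Ns).+1%:R * dt)) (p %% Ns).

Lemma block_st_velocity (w : 'cV[R]_(Nt * Ns)) n : (n < Nt)%N ->
  block x0 (st_velocity w) n.+1 = f (block x0 w n.+1) (n.+1%:R * dt).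
Proof.
move=> n_lt; apply/colP => i; rewrite mxE (vgetE _ (block_index_lt n_lt (ltn_ord i))) mxE.
by have [-> ->] := divn_modn_block n (ltn_ord i); rewrite vget_ord.
Qed.

Lemma st_residB (w y : 'cV[R]_(Nt * Ns)) :
  st_resid dt f k alpha beta x0 w - st_resid dt f k alpha beta x0 y =
  lm_matrix Ns Nt k alpha *m (w - y)
  - dt *: (lm_matrix Ns Nt k beta *m (st_velocity w - st_velocity y)).
Proof.
apply: vget_inj => p p_lt.
have Ns_gt0 : (0 < Ns)%N by case: (Ns) p_lt; rewrite ?muln0.
have i_lt : (p %% Ns < Ns)%N by rewrite ltn_pmod.
rewrite !vgetB vgetZ.
rewrite (@vget_lm_matrix_mul alpha (w - y) p
  (fun m => vget (block x0 w m) (p %% Ns) - vget (block x0 y m) (p %% Ns))) ?subrr //;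
  last by move=> c c_lt; rewrite vgetB !vget_block.
rewrite (@vget_lm_matrix_mul beta _ p (fun m =>
  vget (f (block x0 w m) (m%:R * dt)) (p %% Ns) - vget (f (block x0 y m) (m%:R * dt)) (p %% Ns)))
  ?subrr //; last first.
  by move=> c c_lt; rewrite -(vget_block x0) // blockB !block_st_velocity // vgetB.
rewrite !(vgetE _ p_lt) !mxE /lm_resid !vget_sum -sumrB mulr_sumr -sumrB.
by apply: eq_bigr => j _; rewrite !vgetB !vgetZ; ring.
Qed.

Lemma st_velocity_lipschitz (Lf : R) : 0 <= Lf ->
  (forall (u v : 'cV[R]_Ns) n, (n < Nt)%N ->
     norm2 (f u (n.+1%:R * dt) - f v (n.+1%:R * dt)) <= Lf * norm2 (u - v)) ->
  forall w y : 'cV[R]_(Nt * Ns),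
    norm2 (st_velocity w - st_velocity y) <= Lf * norm2 (w - y).
Proof.
move=> Lf_ge0 f_lip w y; rewrite ler_norm2_mul // !(sqnorm_blocks x0) mulr_sumr.
apply: ler_sum_nat => n /andP[_ n_lt].
rewrite !blockB !block_st_velocity // -!sqr_norm2 -exprMn.
by rewrite lerXn2r ?nnegrE ?mulr_ge0 ?norm2_ge0 ?f_lip.
Qed.

End MultistepResidual.

Lemma residual_minimizer_quasi_optimal (R : rcfType) m n
    (r : 'cV[R]_m -> 'cV[R]_n) (P : 'cV[R]_m -> Prop) (c C : R) (x xt : 'cV[R]_m) :
  0 < c ->
  (forall w y, c * norm2 (w - y) <= norm2 (r w - r y)) ->
  (forall w y, norm2 (r w - r y) <= C * norm2 (w - y)) ->
  r x = 0 -> (forall w, P w -> norm2 (r xt) <= norm2 (r w)) ->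
  forall w, P w -> norm2 (x - xt) <= C / c * norm2 (x - w).
Proof.
move=> c_gt0 r_ge r_le rx0 xt_min w Pw.
rewrite mulrAC ler_pdivlMr // mulrC norm2BC (norm2BC x w).
have := r_ge xt x; have := r_le w x; rewrite rx0 !subr0 => rw_le rxt_ge.
exact: le_trans rxt_ge (le_trans (xt_min w Pw) rw_le).
Qed.

Section ResidualBiLipschitz.
Variable R : rcfType.
Variables (Ns Nt : nat) (dt : R) (f : 'cV[R]_Ns -> R -> 'cV[R]_Ns)
  (k : nat -> nat) (alpha beta : nat -> nat -> R) (x0 : 'cV[R]_Ns) (Lf sBmax : R).
Hypothesis k_le : forall n, (k n <= n)%N.
Hypothesis dt_ge0 : 0 <= dt.
Hypothesis velocity_lipschitz : forall w y : 'cV[R]_(Nt * Ns),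
  norm2 (st_velocity dt f x0 w - st_velocity dt f x0 y) <= Lf * norm2 (w - y).
Hypothesis sBmax_max : is_sigma_max (lm_matrix Ns Nt k beta) sBmax.

Local Notation r := (@st_resid R Ns Nt dt f k alpha beta x0).

Lemma norm2_velocity_termB (w y : 'cV[R]_(Nt * Ns)) :
  norm2 (dt *: (lm_matrix Ns Nt k beta *m (st_velocity dt f x0 w - st_velocity dt f x0 y)))
  <= dt * Lf * sBmax * norm2 (w - y).
Proof.
have sBmax_ge0 : 0 <= sBmax by case: sBmax_max => -[].
rewrite norm2Z ger0_norm // -!mulrA ler_wpM2l // mulrCA.
exact: le_trans (norm2_mulmx_le sBmax_max _) (ler_wpM2l sBmax_ge0 (velocity_lipschitz w y)).
Qed.

Lemma st_resid_lower_bound sAmin : is_sigma_min (lm_matrix Ns Nt k alpha) sAmin ->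
  forall w y, (sAmin - dt * Lf * sBmax) * norm2 (w - y) <= norm2 (r w - r y).
Proof.
move=> sAmin_min w y; rewrite st_residB // mulrBl.
have := norm2_mulmx_ge sAmin_min (w - y); have := norm2_velocity_termB w y.
have := lerB_norm2B (lm_matrix Ns Nt k alpha *m (w - y))
  (dt *: (lm_matrix Ns Nt k beta *m (st_velocity dt f x0 w - st_velocity dt f x0 y))).
lra.
Qed.

Lemma st_resid_upper_bound sAmax : is_sigma_max (lm_matrix Ns Nt k alpha) sAmax ->
  forall w y, norm2 (r w - r y) <= (sAmax + dt * Lf * sBmax) * norm2 (w - y).
Proof.
move=> sAmax_max w y; rewrite st_residB // mulrDl.
have := norm2_mulmx_le sAmax_max (w - y); have := norm2_velocity_termB w y.
have := ler_norm2B (lm_matrix Ns Nt k alpha *m (w - y))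
  (dt *: (lm_matrix Ns Nt k beta *m (st_velocity dt f x0 w - st_velocity dt f x0 y))).
lra.
Qed.

End ResidualBiLipschitz.

Lemma grid_time_in_range (R : rcfType) (T : R) (Nt n : nat) :
  0 < T -> (n < Nt)%N -> 0 <= n.+1%:R * (T / Nt%:R) <= T.
Proof.
move=> T_gt0 n_lt; have Nt_gt0 : 0 < Nt%:R :> R by rewrite ltr0n (leq_ltn_trans _ n_lt).
rewrite mulr_ge0 ?divr_ge0 ?ler0n ?(ltW T_gt0) //= mulrCA.
by rewrite ler_piMr ?(ltW T_gt0) // ler_pdivrMr // mul1r ler_nat.
Qed.

Lemma bigmax_block_le_norm2 (R : rcfType) Ns Nt (x0 : 'cV[R]_Ns) (v : 'cV[R]_(Nt * Ns)) :
  \big[Num.max/0]_(n < Nt) norm2 (block x0 v n.+1) <= norm2 v.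
Proof. by apply: bigmax_le => [|n _]; rewrite ?norm2_ge0 ?norm2_block_le. Qed.

Theorem mainTheorem5 (R : rcfType) (Ns Nt nst : nat) (T : R)
  (f : 'cV[R]_Ns -> R -> 'cV[R]_Ns) (x0 : 'cV[R]_Ns)
  (k : nat -> nat) (alpha beta : nat -> nat -> R)
  (pi : 'I_nst -> 'cV[R]_(Nt * Ns))
  (Lf sAmax sAmin sBmax : R)
  (x xt : 'cV[R]_(Nt * Ns)) :
  (0 < Ns)%N -> (0 < Nt)%N -> 0 < T ->
  (forall n, (k n <= n)%N) ->
  (forall n, (1 <= n <= Nt)%N -> alpha n 0%N != 0) ->
  let dt := T / Nt%:R in
  0 < Lf ->
  (forall (w y : 'cV[R]_Ns) (t : R), 0 <= t <= T ->
      norm2 (f w t - f y t) <= Lf * norm2 (w - y)) ->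
  is_sigma_max (lm_matrix Ns Nt k alpha) sAmax ->
  is_sigma_min (lm_matrix Ns Nt k alpha) sAmin ->
  is_sigma_max (lm_matrix Ns Nt k beta) sBmax ->
  dt * Lf * sBmax < sAmin ->
  st_resid dt f k alpha beta x0 x = 0 ->
  in_trial x0 pi xt ->
  (forall w, in_trial x0 pi w ->
     norm2 (st_resid dt f k alpha beta x0 xt)
       <= norm2 (st_resid dt f k alpha beta x0 w)) ->
  let Lambda := (sAmax - sAmin + 2 * dt * Lf * sBmax)
                / (sAmin - dt * Lf * sBmax) in
  (forall w, in_trial x0 pi w ->
     norm2 (x - xt) <= (1 + Lambda) * norm2 (x - w)) /\
  (forall w, in_trial x0 pi w ->
     \big[Num.max/0]_(n < Nt) norm2 (block x0 x n.+1 - block x0 xt n.+1)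
       <= Num.sqrt (Nt%:R) * (1 + Lambda) *
          \big[Num.max/0]_(n < Nt) norm2 (block x0 x n.+1 - block x0 w n.+1)).
Proof.
move=> _ Nt_gt0 T_gt0 k_le _ dt Lf_gt0 f_lip sAmax_max sAmin_min sBmax_max small_dt
  rx0 _ xt_min Lambda.
have dt_gt0 : 0 < dt by rewrite divr_gt0 // ltr0n.
have sBmax_ge0 : 0 <= sBmax by case: sBmax_max => -[].
have velocity_lip := @st_velocity_lipschitz _ _ Nt _ _ x0 _ (ltW Lf_gt0)
  (fun u v n n_lt => f_lip u v _ (grid_time_in_range T_gt0 n_lt)).
have c_gt0 : 0 < sAmin - dt * Lf * sBmax by rewrite subr_gt0.
have quasi_opt := residual_minimizer_quasi_optimal c_gt0
  (st_resid_lower_bound k_le (ltW dt_gt0) velocity_lip sBmax_max sAmin_min)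
  (st_resid_upper_bound k_le (ltW dt_gt0) velocity_lip sBmax_max sAmax_max)
  rx0 xt_min.
have LambdaE : 1 + Lambda = (sAmax + dt * Lf * sBmax) / (sAmin - dt * Lf * sBmax).
  by rewrite /Lambda; field; rewrite gt_eqF.
have part1 w : in_trial x0 pi w -> norm2 (x - xt) <= (1 + Lambda) * norm2 (x - w).
  by rewrite LambdaE; apply: quasi_opt.
split=> // w w_in.
under eq_bigr do rewrite -blockB; under [in X in _ <= X]eq_bigr do rewrite -blockB.
apply: le_trans (bigmax_block_le_norm2 _ _) _.
rewrite -mulrA mulrCA; apply: le_trans (part1 w w_in) _.
apply: ler_wpM2l (norm2_le_bigmax_blocks _ _).
have sAmax_ge0 : 0 <= sAmax by case: sAmax_max => -[].
have dtLfB_ge0 : 0 <= dt * Lf * sBmax.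
  by rewrite mulr_ge0 // (mulr_ge0 (ltW dt_gt0) (ltW Lf_gt0)).
by rewrite LambdaE; apply: divr_ge0; [exact: addr_ge0 | exact: ltW].
Qed.
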